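(* Let $\lambda \ge \aleph_2$ be a regular cardinal and $S \subseteq \lambda$ stationary. Then the following are equivalent: (1) $\mathsf{uDSR}({<}\lambda, S)$; (2) $\mathsf{DSR}({<}\lambda, S)$; (3) $\mathsf{OSR}(S)$; (4) for every matrix $\langle S_{\alpha,i} \mid \alpha<\lambda,\ i<j_\alpha\rangle$ of stationary subsets of $S$ with $j_\alpha<\lambda$ for all $\alpha<\lambda$, there is $\gamma<\lambda$ with $\mathrm{cf}(\gamma)>\omega$ such that $S_{\alpha,i}$ reflects at $\gamma$ for all $\alpha<\gamma$ and all $i<j_\alpha$.
   Context: A set $T$ of ordinals reflects at an ordinal $\gamma$ if $\mathrm{cf}(\gamma)>\omega$ and $T\cap\gamma$ is stationary in $\gamma$. For $\lambda$ regular uncountable, $S\subseteq\lambda$ stationary and $\kappa\le\lambda$: $\mathsf{DSR}({<}\kappa,S)$ asserts that whenever $\langle S_{\alpha,i}\mid\alpha<\lambda,\ i<j_\alpha\rangle$ is a matrix of stationary subsets of $S$ with $j_\alpha<\kappa$ for all $\alpha$, there are $\gamma<\lambda$ of uncountable cofinality and a club $F\subseteq\gamma$ such that $S_{\alpha,i}$ reflects at $\gamma$ for all $\alpha\in F$, $i<j_\alpha$. $\mathsf{uDSR}({<}\kappa,S)$ is the same with ''club $F\subseteq\gamma$'' replaced by ''unbounded $F\subseteq\gamma$''. $\mathsf{OSR}(S)$ asserts that for every sequence $\langle S_\alpha\mid\alpha<\lambda\rangle$ of stationary subsets of $S$ there is $\delta<\lambda$ with $\mathrm{cf}(\delta)>\omega$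 such that $S_\alpha$ reflects at $\delta$ for all $\alpha<\delta$. *)

(* The regular cardinal lambda is modelled as an abstract
   well-ordered type (T, lt): elements of T are the ordinals < lambda. *)
From Stdlib Require Import Classical.

Section OrdinalNotions.
Variable T : Type.
Variable lt : T -> T -> Prop.
Local Infix "<<" := lt (at level 70).
Local Notation le x y := (lt x y \/ x = y).

Definition is_wellorder : Prop :=
  (forall x, ~ x << x) /\
  (forall x y z, x << y -> y << z -> x << z) /\
  (forall x y, x << y \/ x = y \/ y << x) /\
  well_founded lt.

Definition injects (A : Type) (B : Type) : Prop :=
  exists f : A -> B, forall a b, f a = f b -> a = b.

(* the initial segment {y | y < x}, i.e. the ordinal x *)
Definition seg (x : T) : Type := { y : T | y << x }.

Definition unbounded (A : T -> Prop) : Prop :=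
  forall x, exists a, A a /\ le x a.

(* lambda is a regular cardinal >= aleph_2:
   - it is a cardinal: no ordinal x < lambda is equinumerous to lambda;
   - regular: every unbounded subset has cardinality lambda;
   - >= aleph_2: some x < lambda is uncountable (then lambda > |x| >= aleph_1). *)
Definition regular_cardinal_ge_aleph2 : Prop :=
  is_wellorder /\
  (forall x, ~ injects T (seg x)) /\
  (forall A : T -> Prop, unbounded A -> injects T { a : T | A a }) /\
  (exists x, ~ injects (seg x) nat).

(* cf(gamma) > omega: gamma is nonzero and every countable subset of gamma is
   strictly bounded below gamma (this also excludes successors). *)
Definition uncountable_cof (g : T) : Prop :=
  (exists y, y << g) /\
  forall f : nat -> T, (forall n, f n << g) ->
    exists y, y << g /\ forall n, f n << y.

(* B is the ambient ordinal: B = fun _ => True for lambda itself,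
   B = fun x => x << g for an ordinal g < lambda. *)
Definition club_in (B C : T -> Prop) : Prop :=
  (forall x, C x -> B x) /\
  (forall x, B x -> exists c, C c /\ le x c) /\
  (forall d, B d -> (exists y, y << d) ->
     (forall x, x << d -> exists c, C c /\ x << c /\ c << d) -> C d).

Definition stationary_in (B X : T -> Prop) : Prop :=
  (forall x, X x -> B x) /\
  forall C, club_in B C -> exists x, X x /\ C x.

Definition below (g : T) : T -> Prop := fun x => x << g.

Definition stationary (X : T -> Prop) : Prop := stationary_in (fun _ => True) X.

Definition reflects (X : T -> Prop) (g : T) : Prop :=
  uncountable_cof g /\ stationary_in (below g) (fun x => X x /\ x << g).

Definition subset (X Y : T -> Prop) : Prop := forall x, X x -> Y x.

Definition stat_matrix (S : T -> Prop) (M : T -> T -> T -> Prop) (j : T -> T) : Prop :=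
  forall a i, i << j a -> stationary (M a i) /\ subset (M a i) S.

Definition uDSR_lt_lambda (S : T -> Prop) : Prop :=
  forall M j, stat_matrix S M j ->
    exists g, uncountable_cof g /\
      exists F, subset F (below g) /\ (forall x, x << g -> exists c, F c /\ le x c) /\
        forall a, F a -> forall i, i << j a -> reflects (M a i) g.

Definition DSR_lt_lambda (S : T -> Prop) : Prop :=
  forall M j, stat_matrix S M j ->
    exists g, uncountable_cof g /\
      exists F, club_in (below g) F /\
        forall a, F a -> forall i, i << j a -> reflects (M a i) g.

Definition OSR (S : T -> Prop) : Prop :=
  forall Sq : T -> T -> Prop,
    (forall a, stationary (Sq a) /\ subset (Sq a) S) ->
    exists d, uncountable_cof d /\ forall a, a << d -> reflects (Sq a) d.

Definition cond4 (S : T -> Prop) : Prop :=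
  forall M j, stat_matrix S M j ->
    exists g, uncountable_cof g /\
      forall a, a << g -> forall i, i << j a -> reflects (M a i) g.

End OrdinalNotions.

From Stdlib Require Import Classical ClassicalEpsilon FunctionalExtensionality.
From Stdlib Require Import Relation_Operators Wellfounded.

(* (4) => (2) => (1) are immediate, taking F = γ for the first.  (1) => (3):
   apply uDSR to the matrix whose row α is the initial segment <S_β | β < α>;
   since F is unbounded in γ, every β < γ occurs in some row indexed by F.
   (3) => (4): flatten the matrix into a λ-sequence through an injection
   ι : λ × λ -> λ, cutting the b-th set above a bound c_b of the codes
   ι(b, i), i < j_b.  If all sets of index < δ reflect at δ, then for α < δ
   the α-th set meets δ, so c_α < δ and every ι(α, i) is below δ as well.
   The injection ι is built by recursion along the max-lexicographic order
   of λ × λ, choosing each value above all values at smaller pairs: these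
   pairs lie in a box of size < λ, so by regularity such a value exists. *)

Lemma slexprod_trichotomy A B (RA : A -> A -> Prop) (RB : B -> B -> Prop) :
  (forall x y, RA x y \/ x = y \/ RA y x) ->
  (forall x y, RB x y \/ x = y \/ RB y x) ->
  forall p q, slexprod A B RA RB p q \/ p = q \/ slexprod A B RA RB q p.
Proof.
  intros HA HB [a b] [a' b'].
  destruct (HA a a') as [Ha|[<-|Ha]]; [left; constructor; exact Ha| |right; right; constructor; exact Ha].
  destruct (HB b b') as [Hb|[<-|Hb]]; [left; constructor; exact Hb|auto|right; right; constructor; exact Hb].
Qed.

Lemma sig_eq A (P : A -> Prop) (u v : {x | P x}) : proj1_sig u = proj1_sig v -> u = v.
Proof. apply eq_sig_hprop; intros; apply proof_irrelevance. Qed.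

Section Ordinals.

Variable T : Type.
Variable lt : T -> T -> Prop.
Local Infix "<<" := lt (at level 70).
Local Notation "x <<= y" := (lt x y \/ x = y) (at level 70).

Lemma club_in_below g : club_in T lt (below T lt g) (below T lt g).
Proof.
  split; [|split].
  - auto.
  - intros x Hx; exists x; auto.
  - intros d Hd _ _; exact Hd.
Qed.

Lemma stationary_in_mono B X Y :
  stationary_in T lt B X -> subset T X Y -> subset T Y B -> stationary_in T lt B Y.
Proof.
  intros [_ HX] HXY HYB; split; [exact HYB|].
  intros C HC; destruct (HX C HC) as [x [Xx Cx]]; eauto.
Qed.

Lemma reflects_mono X Y g : subset T X Y -> reflects T lt X g -> reflects T lt Y g.
Proof.
  intros HXY [Hcof HX]; split; [exact Hcof|].
  apply (stationary_in_mono _ _ _ HX).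
  - intros x [Xx Hx]; auto.
  - intros x [_ Hx]; exact Hx.
Qed.

Lemma reflects_witness X g : reflects T lt X g -> exists x, X x /\ x << g.
Proof.
  intros [_ [_ HX]]. destruct (HX _ (club_in_below g)) as [x [Hx _]]; eauto.
Qed.

Section WellOrder.

Hypothesis HW : is_wellorder T lt.

Lemma lt_irrefl x : ~ x << x.
Proof. apply HW. Qed.

Lemma lt_trans x y z : x << y -> y << z -> x << z.
Proof. apply HW. Qed.

Lemma lt_trichotomy x y : x << y \/ x = y \/ y << x.
Proof. apply HW. Qed.

Lemma lt_wf : well_founded lt.
Proof. apply HW. Qed.

Lemma le_trans x y z : x <<= y -> y <<= z -> x <<= z.
Proof. intros [H|<-] [H'|<-]; eauto using lt_trans. Qed.

Lemma lt_le_trans x y z : x << y -> y <<= z -> x << z.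
Proof. intros H [H'|<-]; eauto using lt_trans. Qed.

Lemma le_lt_trans x y z : x <<= y -> y << z -> x << z.
Proof. intros [H|<-] H'; eauto using lt_trans. Qed.

Definition maxo x y : T := if excluded_middle_informative (x << y) then y else x.

Lemma le_maxl x y : x <<= maxo x y.
Proof. unfold maxo; destruct excluded_middle_informative; auto. Qed.

Lemma le_maxr x y : y <<= maxo x y.
Proof.
  unfold maxo; destruct excluded_middle_informative as [|Hn]; auto.
  destruct (lt_trichotomy x y) as [H|[H|H]]; auto; contradiction.
Qed.

Lemma club_in_tail C c :
  club_in T lt (fun _ => True) C -> club_in T lt (fun _ => True) (fun x => C x /\ c <<= x).
Proof.
  intros [_ [HCunb HCcl]]; split; [|split].
  - auto.
  - intros x _. destruct (HCunb (maxo x c) I) as [c' [Cc' Hc']].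
    exists c'; split; [split; [exact Cc'|]|]; eapply le_trans; [|exact Hc'| |exact Hc'];
      auto using le_maxl, le_maxr.
  - intros d _ [y Hy] Hlim. split.
    + apply HCcl; [exact I|exists y; exact Hy|].
      intros x Hx. destruct (Hlim x Hx) as [c' [[Cc' _] Hc']]; eauto.
    + destruct (Hlim y Hy) as [c' [[_ Hcc'] [_ Hc'd]]].
      left; eapply le_lt_trans; eauto.
Qed.

Lemma stationary_tail X c :
  stationary T lt X -> stationary T lt (fun x => X x /\ c <<= x).
Proof.
  intros [_ HX]; split; [auto|].
  intros C HC. destruct (HX _ (club_in_tail C c HC)) as [x [Xx [Cx Hcx]]]; eauto.
Qed.

Definition pair_rank (p : T * T) : T * (T * T) := (maxo (fst p) (snd p), p).

Definition pair_lt (p q : T * T) : Prop :=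
  slexprod T (T * T) lt (slexprod T T lt lt) (pair_rank p) (pair_rank q).

Lemma pair_lt_wf : well_founded pair_lt.
Proof.
  apply (wf_inverse_image _ _ _ pair_rank), wf_slexprod; [|apply wf_slexprod]; exact lt_wf.
Qed.

Lemma pair_lt_trichotomy p q : pair_lt p q \/ p = q \/ pair_lt q p.
Proof.
  unfold pair_lt.
  destruct (slexprod_trichotomy _ _ _ _ lt_trichotomy
              (slexprod_trichotomy _ _ _ _ lt_trichotomy lt_trichotomy)
              (pair_rank p) (pair_rank q)) as [H|[H|H]]; auto.
  right; left; exact (f_equal snd H).
Qed.

Lemma pair_lt_components q p :
  pair_lt q p -> fst q <<= maxo (fst p) (snd p) /\ snd q <<= maxo (fst p) (snd p).
Proof.
  intros H.
  assert (Hmax : maxo (fst q) (snd q) <<= maxo (fst p) (snd p))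
    by (inversion H; auto).
  split; eapply le_trans; [apply le_maxl|exact Hmax|apply le_maxr|exact Hmax].
Qed.

End WellOrder.

Lemma DSR_uDSR S : DSR_lt_lambda T lt S -> uDSR_lt_lambda T lt S.
Proof.
  intros HD M j Hm. destruct (HD M j Hm) as [g [Hcof [F [[HFsub [HFunb _]] HF]]]].
  exists g; split; [exact Hcof|]. exists F; auto.
Qed.

Lemma cond4_DSR S : cond4 T lt S -> DSR_lt_lambda T lt S.
Proof.
  intros H4 M j Hm. destruct (H4 M j Hm) as [g [Hcof Hg]].
  exists g; split; [exact Hcof|]. exists (below T lt g); split; [apply club_in_below|exact Hg].
Qed.

Lemma uDSR_OSR S : is_wellorder T lt -> uDSR_lt_lambda T lt S -> OSR T lt S.
Proof.
  intros HW HU Sq HSq.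
  destruct (HU (fun _ i => Sq i) (fun a => a)) as [g [Hcof [F [_ [HFunb HF]]]]].
  { intros a i _; exact (HSq i). }
  exists g; split; [exact Hcof|]. intros a Ha.
  destruct (proj2 Hcof (fun _ => a) (fun _ => Ha)) as [y [Hy Hay]].
  destruct (HFunb y Hy) as [c [Fc Hyc]].
  apply (HF c Fc a); eapply lt_le_trans; [exact HW|exact (Hay 0)|exact Hyc].
Qed.

Section FlatMatrix.

Hypothesis HW : is_wellorder T lt.
Variables (S : T -> Prop) (M : T -> T -> T -> Prop) (j : T -> T).
Hypothesis HS : stationary T lt S.
Hypothesis HM : stat_matrix T lt S M j.
Variables (code : T * T -> T) (bound : T -> T).
Hypothesis code_inj : forall p q, code p = code q -> p = q.

(* Indices that code no matrix entry are filled with S. *)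
Definition flat_matrix (b x : T) : Prop :=
  ((exists a i, code (a, i) = b /\ i << j a /\ M a i x) \/
   (~ (exists a i, code (a, i) = b /\ i << j a) /\ S x)) /\ bound b <<= x.

Lemma flat_matrix_stationary b :
  stationary T lt (flat_matrix b) /\ subset T (flat_matrix b) S.
Proof.
  split.
  - destruct (classic (exists a i, code (a, i) = b /\ i << j a)) as [[a [i [Hb Hi]]]|Hnone].
    + apply (stationary_in_mono _ (fun x => M a i x /\ bound b <<= x)).
      * apply stationary_tail; [exact HW|apply (HM a i Hi)].
      * intros x [Hx Hbx]; split; [left; exists a, i; auto|exact Hbx].
      * intros x _; exact I.
    + apply (stationary_in_mono _ (fun x => S x /\ bound b <<= x)).
      * apply stationary_tail; assumption.
      * intros x [Hx Hbx]; split; [right; auto|exact Hbx].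
      * intros x _; exact I.
  - intros x [[[a [i [_ [Hi Hx]]]]|[_ Hx]] _]; [apply (HM a i Hi)|]; exact Hx.
Qed.

Lemma flat_matrix_code_subset a i : i << j a -> subset T (flat_matrix (code (a, i))) (M a i).
Proof.
  intros Hi x [[[a' [i' [E [_ Hx]]]]|[Hnone _]] _].
  - apply code_inj in E; injection E as -> ->; exact Hx.
  - exfalso; apply Hnone; exists a, i; auto.
Qed.

Lemma reflects_flat_matrix_bound b g : reflects T lt (flat_matrix b) g -> bound b << g.
Proof.
  intros Hb. destruct (reflects_witness _ _ Hb) as [x [[_ Hbx] Hx]].
  eapply le_lt_trans; eauto.
Qed.

End FlatMatrix.

Section Regular.

Hypothesis HR : regular_cardinal_ge_aleph2 T lt.

Let HW : is_wellorder T lt := proj1 HR.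

Lemma exists_gt x : exists y, x << y.
Proof.
  apply NNPP; intros Hmax.
  pose proof HR as [_ [_ [Hreg [x0 Hx0]]]].
  assert (Hunb : unbounded T lt (fun a => a = x)).
  { intros z; exists x; split; [reflexivity|].
    destruct (lt_trichotomy HW z x) as [H|[H|H]]; auto.
    exfalso; apply Hmax; eauto. }
  destruct (Hreg _ Hunb) as [f Hf].
  assert (Hall : forall a b : T, a = b).
  { intros a b; apply Hf, sig_eq. now rewrite (proj2_sig (f a)), (proj2_sig (f b)). }
  apply Hx0; exists (fun _ => 0); intros u v _; apply sig_eq, Hall.
Qed.

Lemma bounded_of_injects_seg (A : T -> Prop) m :
  injects {a | A a} (seg T lt m) -> exists B, forall a, A a -> a << B.
Proof.
  intros [k Hk].
  pose proof HR as [_ [Hcard [Hreg _]]].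
  destruct (classic (unbounded T lt A)) as [Hunb|Hbdd].
  - exfalso. destruct (Hreg A Hunb) as [f Hf]. apply (Hcard m).
    exists (fun a => k (f a)); auto.
  - apply not_all_ex_not in Hbdd as [B HB]. exists B; intros a Ha.
    destruct (lt_trichotomy HW a B) as [H|[H|H]]; auto;
      exfalso; apply HB; eauto.
Qed.

Lemma image_seg_bounded (h : T -> T) m : exists B, forall u, u << m -> h u << B.
Proof.
  pose (A := fun a => exists u, u << m /\ h u = a).
  assert (Hpre : forall s : {a | A a}, exists u : seg T lt m, h (proj1_sig u) = proj1_sig s).
  { intros [a [u [Hu Ha]]]; exists (exist _ u Hu); exact Ha. }
  destruct (choice _ Hpre) as [k Hk].
  destruct (bounded_of_injects_seg A m) as [B HB].
  - exists k; intros s1 s2 E; apply sig_eq; now rewrite <- Hk, E, Hk.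
  - exists B; intros u Hu; apply HB; exists u; auto.
Qed.

Lemma image_box_bounded (g : T * T -> T) m :
  exists B, forall x y, x << m -> y << m -> g (x, y) << B.
Proof.
  destruct (choice _ (fun x => image_seg_bounded (fun y => g (x, y)) m)) as [b Hb].
  destruct (image_seg_bounded b m) as [B HB].
  exists B; intros x y Hx Hy; eapply lt_trans; eauto.
Qed.

Lemma injects_prod : injects (T * T) T.
Proof.
  pose (iota := Fix (pair_lt_wf HW) (fun _ => T) (fun p rec =>
     epsilon (inhabits (fst p)) (fun t => forall q (H : pair_lt q p), rec q H << t))).
  assert (iota_eq : forall p,
    iota p = epsilon (inhabits (fst p)) (fun t => forall q, pair_lt q p -> iota q << t)).
  { intros p; unfold iota; rewrite Fix_eq; [reflexivity|].
    intros x f f' Hff'.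
    replace f' with f; [reflexivity|].
    apply functional_extensionality_dep; intro y.
    apply functional_extensionality_dep; intro h; apply Hff'. }
  assert (iota_incr : forall p q, pair_lt q p -> iota q << iota p).
  { intros p; rewrite iota_eq; apply epsilon_spec.
    destruct (exists_gt (maxo (fst p) (snd p))) as [m Hm].
    destruct (image_box_bounded iota m) as [B HB].
    exists B; intros [a b] Hq.
    destruct (pair_lt_components HW _ _ Hq) as [Ha Hb].
    apply HB; eapply le_lt_trans; eauto. }
  exists iota; intros p q E.
  destruct (pair_lt_trichotomy HW p q) as [H|[H|H]]; auto;
    exfalso; apply (lt_irrefl HW (iota p)).
  - rewrite E at 2; auto.
  - rewrite E at 1; auto.
Qed.

Lemma OSR_cond4 S : stationary T lt S -> OSR T lt S -> cond4 T lt S.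
Proof.
  intros HS HO M j HM.
  destruct (injects_prod) as [code code_inj].
  destruct (choice _ (fun a => image_seg_bounded (fun i => code (a, i)) (j a)))
    as [bound Hbound].
  destruct (HO _ (flat_matrix_stationary HW S M j HS HM code bound)) as [d [Hcof Hd]].
  exists d; split; [exact Hcof|]. intros a Ha i Hi.
  apply (reflects_mono _ _ _ (flat_matrix_code_subset S M j code bound code_inj a i Hi)), Hd.
  apply (lt_trans HW _ (bound a)); [apply Hbound, Hi|].
  eapply reflects_flat_matrix_bound; eauto.
Qed.

End Regular.

End Ordinals.

Theorem lemma2p3 (T : Type) (lt : T -> T -> Prop)
  (Hlam : regular_cardinal_ge_aleph2 T lt)
  (S : T -> Prop) (HS : stationary T lt S) :
  (uDSR_lt_lambda T lt S <-> DSR_lt_lambda T lt S) /\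
  (DSR_lt_lambda T lt S <-> OSR T lt S) /\
  (OSR T lt S <-> cond4 T lt S).
Proof.
  pose proof (DSR_uDSR T lt S).
  pose proof (cond4_DSR T lt S).
  pose proof (uDSR_OSR T lt S (proj1 Hlam)).
  pose proof (OSR_cond4 T lt Hlam S HS).
  tauto.
Qed.
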